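(* Let $G$ be a graph with vertex set $V(G)=\{u_1,\ldots,u_n\}$ and let $H_1,\ldots,H_n$ be pairwise disjoint graphs such that at least one of the $H_i$ is not a complete graph. Let $M=\max\Big\{\sum_{j=1}^k box(H_{i_j}) : \{u_{i_1},\ldots,u_{i_k}\}\text{ is a clique in } G \text{ and each } H_{i_j} \text{ is not a complete graph}\Big\}.$ Then $M\leq box(G[H_1,H_2,\ldots,H_n])\leq \sum_{i=1}^n box(H_i)$.
   Context: All graphs are simple, finite and undirected. For a graph $G$ with vertex set $\{u_1,\ldots,u_n\}$ and pairwise disjoint graphs $H_1,\ldots,H_n$, the $G$-generalized join $G[H_1,\ldots,H_n]$ is the graph obtained from $G$ by replacing each vertex $u_i$ by $H_i$ and joining every vertex of $H_i$ to every vertex of $H_j$ whenever $u_i$ is adjacent to $u_j$ in $G$ (no other edges between different $H_i$'s). An $\ell$-box is a Cartesian product of $\ell$ closed bounded real intervals; the boxicity $box(G)$ of a graph $G$ is the least positive integer $\ell$ such that $G$ is isomorphic to the intersection graph of a family of $\ell$-boxes. A clique in $G$ is a set of pairwise adjacent vertices (a single vertex is a clique). *)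

From Stdlib Require Import Reals.
From mathcomp Require Import all_boot.
From mathcomp Require Import boolp.

Set Implicit Arguments.
Unset Strict Implicit.
Unset Printing Implicit Defensive.

Definition simple_graph (T : Type) (e : rel T) : Prop :=
  symmetric e /\ irreflexive e.

Definition complete_graph (T : Type) (e : rel T) : Prop :=
  forall x y : T, x <> y -> e x y.

Definition clique (T : finType) (e : rel T) (C : {set T}) : Prop :=
  forall x y, x \in C -> y \in C -> x <> y -> e x y.

(* An l-box is given by lower/upper corners lo <= hi coordinatewise;
   e is (isomorphic to) the intersection graph of the family of l-boxes
   (lo x, hi x)_{x : T}: distinct x, y are adjacent iff their boxes meet. *)
Definition box_rep (T : Type) (e : rel T) (l : nat) : Prop :=
  exists lo hi : T -> 'I_l -> R,
    (forall x k, Rle (lo x k) (hi x k)) /\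
    (forall x y, x <> y ->
       (e x y <->
        exists p : 'I_l -> R, forall k,
          (Rle (lo x k) (p k) /\ Rle (p k) (hi x k)) /\
          (Rle (lo y k) (p k) /\ Rle (p k) (hi y k)))).

Definition box_pred (T : Type) (e : rel T) : pred nat :=
  fun l => `[< (0 < l)%N /\ box_rep e l >].

(* boxicity: least positive l admitting a box representation
   (0 by convention if none exists, which never happens for finite graphs). *)
Definition boxicity (T : Type) (e : rel T) : nat :=
  match pselect (exists l, box_pred e l) with
  | left h => ex_minn h
  | right _ => 0
  end.

Definition gjoin (V : finType) (g : rel V) (H : V -> finType)
    (h : forall v, rel (H v)) : rel {v : V & H v} :=
  fun x y =>
    if tag x == tag y then h (tag x) (tagged x) (tagged_as x y)
    else g (tag x) (tag y).

(* Upper bound: give each part H_i its own block of box(H_i) coordinates, in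
   which H_i keeps its boxes while every other part gets an interval meeting
   all of them or missing all of them, according to its adjacency to i in G.
   Lower bound: in a box representation of the join, call a coordinate
   separating for H_v if two vertices of H_v get disjoint intervals there.
   These coordinates alone represent H_v, and they are nonempty when H_v is not
   complete. Two parts adjacent in G share none of them, since two disjoint
   intervals cannot both meet two other disjoint intervals (interval graphs
   have no induced 4-cycle); so their numbers add up to at most the dimension. *)

From Stdlib Require Import Reals Lra.
From mathcomp Require Import all_boot boolp.

Set Implicit Arguments.
Unset Strict Implicit.
Unset Printing Implicit Defensive.

Local Open Scope R_scope.

Definition intervals_meet (a b c d : R) : Prop := c <= b /\ a <= d.

Definition meet_at (T I : Type) (lo hi : T -> I -> R) (k : I) (x y : T) : Prop :=
  intervals_meet (lo x k) (hi x k) (lo y k) (hi y k).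

Lemma meet_at_sym (T I : Type) (lo hi : T -> I -> R) k x y :
  meet_at lo hi k x y <-> meet_at lo hi k y x.
Proof. by rewrite /meet_at /intervals_meet; tauto. Qed.

Definition boxes_meet (T I : Type) (lo hi : T -> I -> R) (x y : T) : Prop :=
  forall k, meet_at lo hi k x y.

Definition box_repr (T I : Type) (e : rel T) (lo hi : T -> I -> R) : Prop :=
  (forall x k, lo x k <= hi x k) /\
  (forall x y, x <> y -> e x y <-> boxes_meet lo hi x y).

Lemma boxes_meetP (T I : Type) (lo hi : T -> I -> R) x y :
  (forall k, lo x k <= hi x k) -> (forall k, lo y k <= hi y k) ->
  (exists p : I -> R, forall k,
     (lo x k <= p k /\ p k <= hi x k) /\ (lo y k <= p k /\ p k <= hi y k)) <->
  boxes_meet lo hi x y.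
Proof.
move=> lehx lehy; split=> [[p Hp] k|meet_xy].
  by have := Hp k; rewrite /meet_at /intervals_meet; lra.
exists (fun k => Rmax (lo x k) (lo y k)) => k.
have [lyhx lxhy] := meet_xy k.
have := Rmax_l (lo x k) (lo y k); have := Rmax_r (lo x k) (lo y k).
have := Rmax_lub _ _ _ (lehx k) lyhx; have := Rmax_lub _ _ _ lxhy (lehy k).
lra.
Qed.

Lemma box_repP (T : Type) (e : rel T) l :
  box_rep e l <-> exists lo hi : T -> 'I_l -> R, box_repr e lo hi.
Proof.
split=> -[lo [hi [le_lohi repr]]]; exists lo, hi; split=> // x y xy.
  by rewrite -boxes_meetP; [exact: repr | exact: le_lohi ..].
by rewrite boxes_meetP; [exact: repr | exact: le_lohi ..].
Qed.

Lemma box_repr_card (T : Type) (e : rel T) (I : finType) (lo hi : T -> I -> R) :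
  box_repr e lo hi -> box_rep e #|I|.
Proof.
move=> [le_lohi repr]; apply/box_repP.
exists (fun x i => lo x (enum_val i)), (fun x i => hi x (enum_val i)).
split=> // x y xy; rewrite repr //.
by split=> meet_xy k; last rewrite -(enum_rankK k); apply: meet_xy.
Qed.

Lemma boxicity_min (T : Type) (e : rel T) l :
  (0 < l)%N -> box_rep e l -> (boxicity e <= l)%N.
Proof.
move=> l_gt0 rep; have bl : box_pred e l by apply/asboolP.
rewrite /boxicity; case: pselect => [ex|]; last by case; exists l.
by case: ex_minnP => m _ /(_ _ bl).
Qed.

Lemma boxicity_spec (T : Type) (e : rel T) l :
  (0 < l)%N -> box_rep e l -> (0 < boxicity e)%N /\ box_rep e (boxicity e).
Proof.
move=> l_gt0 rep; have bl : box_pred e l by apply/asboolP.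
rewrite /boxicity; case: pselect => [ex|]; last by case; exists l.
by case: ex_minnP => m /asboolP.
Qed.

(* Roberts' construction: one coordinate per ordered non-adjacent pair (a, b),
   where a gets [0, 0], b gets [1, 1] and every other vertex [0, 1]; the
   coordinate [None] only makes the dimension positive. *)
Lemma box_repr_roberts (T : finType) (e : rel T) : symmetric e ->
  exists lo hi : T -> option (T * T) -> R, box_repr e lo hi.
Proof.
move=> e_sym; pose sep a b := (a != b) && ~~ e a b.
pose lo x k := if k is Some (a, b) then (if (x == b) && sep a b then 1 else 0) else 0.
pose hi x k := if k is Some (a, b) then (if (x == a) && sep a b then 0 else 1) else 1.
have le_lohi x k : lo x k <= hi x k.
  case: k => [[a b]|] /=; last lra.
  case: (boolP (sep a b)) => [/andP[ab _]|_]; rewrite ?andbF ?andbT; last lra.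
  case: (x =P b) => [->|_]; last by case: ifP; lra.
  by rewrite eq_sym (negbTE ab); lra.
have adj_meet x y : e x y -> boxes_meet lo hi x y.
  move=> exy [[a b]|]; rewrite /meet_at /intervals_meet /=; last lra.
  case: (boolP (sep a b)) => [/andP[_ nab]|_]; rewrite ?andbF ?andbT; last lra.
  have [/andP[xa yb] | not_ab] := boolP ((x == a) && (y == b)).
    by move: xa yb nab => /eqP <- /eqP <-; rewrite exy.
  have [/andP[xb ya] | not_ba] := boolP ((x == b) && (y == a)).
    by move: xb ya nab => /eqP <- /eqP <-; rewrite e_sym exy.
  move: not_ab not_ba.
  by case: (x == a); case: (y == b); case: (x == b); case: (y == a) => //= _ _; lra.
exists lo, hi; split=> // x y xy; split; first exact: adj_meet.
move=> meet_xy; apply/negPn/negP => nexy.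
have := meet_xy (Some (x, y)); rewrite /meet_at /intervals_meet /= /sep !eqxx nexy andbT.
by rewrite (introF eqP xy) /=; lra.
Qed.

Lemma boxicity_finite (T : finType) (e : rel T) : symmetric e ->
  (0 < boxicity e)%N /\ box_rep e (boxicity e).
Proof.
move=> /box_repr_roberts [lo [hi /box_repr_card rep]].
by apply: boxicity_spec rep; rewrite card_option.
Qed.

Lemma atan_le x y : x <= y <-> atan x <= atan y.
Proof.
split=> [le_xy|le_atan]; last by apply: Rnot_lt_le => /atan_increasing; lra.
by have [/atan_increasing|->] := Rle_lt_or_eq_dec _ _ le_xy; lra.
Qed.

(* [atan] is increasing, so it preserves which intervals meet, and maps R into
   (-PI/2, PI/2). *)
Lemma box_repr_in_cube (T I : Type) (e : rel T) (lo hi : T -> I -> R) :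
  box_repr e lo hi -> exists lo' hi' : T -> I -> R,
    box_repr e lo' hi' /\ forall x k, -2 <= lo' x k /\ hi' x k <= 2.
Proof.
move=> [le_lohi repr].
exists (fun x k => atan (lo x k)), (fun x k => atan (hi x k)); split.
  split=> [x k|x y xy]; first by rewrite /= -atan_le.
  rewrite repr // /boxes_meet /meet_at /intervals_meet /=.
  by split=> meet_xy k; have := meet_xy k; rewrite -!atan_le.
move=> x k; have := atan_bound (lo x k); have := atan_bound (hi x k).
have := PI_4; lra.
Qed.

Lemma intervals_C4_free (l1 h1 l2 h2 l3 h3 l4 h4 : R) :
  ~ intervals_meet l1 h1 l2 h2 -> ~ intervals_meet l3 h3 l4 h4 ->
  intervals_meet l1 h1 l3 h3 -> intervals_meet l1 h1 l4 h4 ->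
  intervals_meet l2 h2 l3 h3 -> intervals_meet l2 h2 l4 h4 -> False.
Proof.
rewrite /intervals_meet => n12 n34 [? ?] [? ?] [? ?] [? ?].
have [|] := Rle_dec l1 h2; have [|] := Rle_dec l2 h1; try tauto;
have [|] := Rle_dec l3 h4; have [|] := Rle_dec l4 h3; try tauto; lra.
Qed.

Lemma box_repr_restrict (T T' I : Type) (e : rel T) (e' : rel T') (f : T' -> T)
    (P : pred I) (lo hi : T -> I -> R) :
  injective f -> e' =2 relpre f e -> box_repr e lo hi ->
  (forall x y, x <> y -> ~~ e' x y -> exists2 k, P k & ~ meet_at lo hi k (f x) (f y)) ->
  box_repr e' (fun x (k : {k | P k}) => lo (f x) (val k))
              (fun x (k : {k | P k}) => hi (f x) (val k)).
Proof.
move=> f_inj e'E [le_lohi repr] separated; split=> // x y xy.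
have fxy : f x <> f y by move/f_inj.
rewrite e'E /= repr //; split=> [meet_xy k|meet_xy]; first exact: meet_xy.
apply: contrapT => /(repr _ _ fxy)/negP nexy.
move: (separated _ _ xy); rewrite e'E => /(_ nexy) [k Pk].
by apply; apply: (meet_xy (exist _ k Pk)).
Qed.

Lemma sum_card_disjoint_le (I K : finType) (C : {set I}) (J : I -> {set K}) :
  {in C &, forall u w, u != w -> [disjoint J u & J w]} ->
  (\sum_(v in C) #|J v| <= #|K|)%N.
Proof.
move=> disjJ; pose F v := if v \in C then J v else set0.
have disjF u w : u != w -> [disjoint F u & F w].
  rewrite /F -setI_eq0; case: ifP => uC; case: ifP => wC; rewrite ?set0I ?setI0 //.
  by rewrite setI_eq0; apply: disjJ.
rewrite big_mkcond (eq_bigr (fun v => #|F v|)) => [|v _]; last first.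
  by rewrite /F; case: ifP; rewrite ?cards0.
under eq_bigr do rewrite -sum1_card.
by rewrite -partition_disjoint_bigcup // sum1_card max_card.
Qed.

Lemma not_complete_non_edge (T : Type) (e : rel T) :
  ~ complete_graph e -> exists x y, x <> y /\ ~~ e x y.
Proof.
move=> not_complete; apply: contrapT => no_non_edge; apply: not_complete => x y xy.
by apply/negPn/negP => nexy; apply: no_non_edge; exists x, y.
Qed.

Section GeneralizedJoin.
Variables (V : finType) (g : rel V) (H : V -> finType) (h : forall v, rel (H v)).
Arguments h : clear implicits.

Lemma gjoin_in v (a b : H v) : gjoin g h (existT _ v a) (existT _ v b) = h v a b.
Proof. by rewrite /gjoin /= eqxx tagged_asE. Qed.

Lemma gjoin_out v w (a : H v) (b : H w) :
  v != w -> gjoin g h (existT _ v a) (existT _ w b) = g v w.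
Proof. by rewrite /gjoin /= => /negbTE ->. Qed.

Lemma gjoin_sym : symmetric g -> (forall v, symmetric (h v)) -> symmetric (gjoin g h).
Proof.
move=> g_sym h_sym [v a] [w b]; have [vw|vw] := eqVneq v w.
  by subst w; rewrite !gjoin_in h_sym.
by rewrite !gjoin_out 1?(eq_sym w v) //; apply: g_sym.
Qed.

End GeneralizedJoin.

Section JoinUpperBound.
Variables (V : finType) (g : rel V) (H : V -> finType) (h : forall v, rel (H v)).
Variables (b : V -> nat) (lo hi : forall v, H v -> 'I_(b v) -> R).
Arguments h : clear implicits.
Hypothesis g_sym : symmetric g.
Hypothesis b_gt0 : forall v, (0 < b v)%N.
Hypothesis repr : forall v, box_repr (h v) (@lo v) (@hi v).
Hypothesis in_cube : forall v (a : H v) c, -2 <= lo a c /\ hi a c <= 2.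

(* In the coordinates (i, c) coming from H_i, the vertices of H_i keep their
   intervals, those of a part adjacent to i get [-2, 3], and all others [3, 3]. *)
Definition join_lo (z : {v & H v}) (k : {v & 'I_(b v)}) : R :=
  untag (if g (tag k) (tag z) then -2 else 3) (fun a => lo a (tagged k)) z.

Definition join_hi (z : {v & H v}) (k : {v & 'I_(b v)}) : R :=
  untag 3 (fun a => hi a (tagged k)) z.

Lemma join_lo_in i (a : H i) c : join_lo (existT _ i a) (existT _ i c) = lo a c.
Proof. exact: (untagE _ _ (u := existT _ i a) erefl). Qed.

Lemma join_hi_in i (a : H i) c : join_hi (existT _ i a) (existT _ i c) = hi a c.
Proof. exact: (untagE _ _ (u := existT _ i a) erefl). Qed.

Lemma join_lo_out i j (a : H j) c : j != i ->
  join_lo (existT _ j a) (existT _ i c) = if g i j then -2 else 3.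
Proof. exact: (untag_dflt _ _ (u := existT _ j a)). Qed.

Lemma join_hi_out i j (a : H j) c : j != i -> join_hi (existT _ j a) (existT _ i c) = 3.
Proof. exact: (untag_dflt _ _ (u := existT _ j a)). Qed.

Lemma join_meet_out i j j' (a : H j) (a' : H j') c : j != i -> j' != i ->
  meet_at join_lo join_hi (existT _ i c) (existT _ j a) (existT _ j' a').
Proof.
move=> ji j'i; rewrite /meet_at /intervals_meet !join_lo_out // !join_hi_out //.
by case: ifP => _; case: ifP => _; lra.
Qed.

Lemma join_meet_in_out i j (a : H i) (a' : H j) c : j != i ->
  meet_at join_lo join_hi (existT _ i c) (existT _ i a) (existT _ j a') <-> g i j.
Proof.
move=> ji; rewrite /meet_at /intervals_meet join_lo_in join_hi_in.
rewrite join_lo_out // join_hi_out //.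
have [lo_ge hi_le] := in_cube a c; have le_lohi := (repr i).1 a c.
by case: ifP => _; split=> //; [move=> _ | move=> ?; exfalso]; lra.
Qed.

Lemma join_box_repr : box_repr (gjoin g h) join_lo join_hi.
Proof.
split=> [[j a] [i c]|[j a] [j' a'] xy].
  have [ji|ji] := eqVneq j i.
    by subst i; rewrite join_lo_in join_hi_in; apply: (repr j).1.
  by rewrite join_lo_out // join_hi_out //; case: ifP => _; lra.
have [jj'|jj'] := eqVneq j j'.
  subst j'; have aa' : a <> a' by move=> eq_aa'; apply: xy; rewrite eq_aa'.
  rewrite gjoin_in (repr j).2 //; split=> [meet_aa' [i c]|meet_aa' c].
    have [ji|ji] := eqVneq j i; last exact: join_meet_out.
    by subst i; rewrite /meet_at !join_lo_in !join_hi_in; apply: meet_aa'.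
  by have := meet_aa' (existT _ j c); rewrite /meet_at !join_lo_in !join_hi_in.
rewrite gjoin_out //; split=> [gjj' [i c]|meet_xy].
  have [ji|ji] := eqVneq j i.
    by subst i; apply/join_meet_in_out; rewrite 1?eq_sym.
  have [j'i|j'i] := eqVneq j' i; last exact: join_meet_out.
  by subst i; apply/meet_at_sym/join_meet_in_out; rewrite // g_sym.
apply/(join_meet_in_out a a' (Ordinal (b_gt0 j))); first by rewrite eq_sym.
exact: meet_xy.
Qed.

End JoinUpperBound.

Lemma card_tagged_ord (V : finType) (b : V -> nat) :
  #|{: {v : V & 'I_(b v)}}| = (\sum_v b v)%N.
Proof.
rewrite card_tagged sumnE big_map big_enum /=.
by apply: eq_bigr => v _; rewrite card_ord.
Qed.

Lemma boxicity_gjoin_le (V : finType) (g : rel V) (H : V -> finType)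
    (h : forall v, rel (H v)) :
  symmetric g -> (forall v, symmetric (h v)) -> (0 < #|V|)%N ->
  (boxicity (gjoin g h) <= \sum_v boxicity (h v))%N.
Proof.
move=> g_sym h_sym /card_gt0P [v0 _].
have box_gt0 v := (boxicity_finite (h_sym v)).1.
have cube_repr v : exists r : (H v -> 'I_(boxicity (h v)) -> R) *
                               (H v -> 'I_(boxicity (h v)) -> R),
    box_repr (h v) r.1 r.2 /\ forall a c, -2 <= r.1 a c /\ r.2 a c <= 2.
  have [_ /box_repP [lo [hi /box_repr_in_cube [lo' [hi' rep]]]]] :=
    boxicity_finite (h_sym v).
  by exists (lo', hi').
have r_spec v := svalP (cid (cube_repr v)).
move: (join_box_repr g_sym box_gt0 (fun v => (r_spec v).1) (fun v => (r_spec v).2)).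
move=> /box_repr_card; rewrite card_tagged_ord; apply: boxicity_min.
by rewrite (bigD1 v0) //= addn_gt0 box_gt0.
Qed.

Section JoinLowerBound.
Variables (V : finType) (g : rel V) (H : V -> finType) (h : forall v, rel (H v)).
Variables (I : finType) (lo hi : {v & H v} -> I -> R).
Arguments h : clear implicits.
Hypothesis repr : box_repr (gjoin g h) lo hi.

Definition separating v : {set I} :=
  [set k | `[< exists a b : H v, ~ meet_at lo hi k (existT _ v a) (existT _ v b) >]].

Lemma separating_non_edge v (a b : H v) : a <> b -> ~~ h v a b ->
  exists2 k, k \in separating v & ~ meet_at lo hi k (existT _ v a) (existT _ v b).
Proof.
move=> ab nab; have ab' : existT _ v a <> existT _ v b :> {v & H v}.
  by move=> /eqP; rewrite eq_Tagged => /eqP.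
have /existsNP [k not_meet] : ~ boxes_meet lo hi (existT _ v a) (existT _ v b).
  by rewrite -repr.2 // gjoin_in; apply/negP.
by exists k => //; rewrite inE; apply/asboolP; exists a, b.
Qed.

Lemma boxicity_le_separating v :
  ~ complete_graph (h v) -> (boxicity (h v) <= #|separating v|)%N.
Proof.
move=> /not_complete_non_edge [a [b [ab nab]]].
have [k sep_k _] := separating_non_edge ab nab.
apply: boxicity_min; first by apply/card_gt0P; exists k.
have -> : #|separating v| = #|{: {k | k \in separating v}}| by rewrite card_sig.
apply: box_repr_card
  (box_repr_restrict (e' := h v) (f := fun a : H v => existT _ v a) _ _ repr _).
- by move=> x y /eqP; rewrite eq_Tagged => /eqP.
- by move=> x y /=; rewrite gjoin_in.
- exact: separating_non_edge.
Qed.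

Lemma separating_disjoint u w :
  u != w -> g u w -> [disjoint separating u & separating w].
Proof.
move=> uw guw; apply/pred0P => k /=; apply/negP => /andP[].
rewrite !inE => /asboolP [a1 [b1 sep_u]] /asboolP [a2 [b2 sep_w]].
have cross (x : H u) (y : H w) : meet_at lo hi k (existT _ u x) (existT _ w y).
  have xy : existT _ u x <> existT _ w y :> {v & H v}.
    by move=> /(congr1 tag) /= /eqP; rewrite (negbTE uw).
  by apply: (repr.2 _ _ xy).1; rewrite gjoin_out.
exact: intervals_C4_free sep_u sep_w
  (cross a1 a2) (cross a1 b2) (cross b1 a2) (cross b1 b2).
Qed.

End JoinLowerBound.

Lemma sum_boxicity_clique_le (V : finType) (g : rel V) (H : V -> finType)
    (h : forall v, rel (H v)) (C : {set V}) l :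
  clique g C -> {in C, forall v, ~ complete_graph (h v)} ->
  box_rep (gjoin g h) l -> (\sum_(v in C) boxicity (h v) <= l)%N.
Proof.
move=> clC ncC /box_repP [lo [hi repr]].
apply: (@leq_trans (\sum_(v in C) #|separating lo hi v|)).
  by apply: leq_sum => v vC; exact: (boxicity_le_separating repr (ncC v vC)).
rewrite -[X in (_ <= X)%N]card_ord; apply: sum_card_disjoint_le => u w uC wC uw.
exact: (separating_disjoint repr uw (clC u w uC wC (elimN eqP uw))).
Qed.

Theorem theorem3p1 (V : finType) (g : rel V) (H : V -> finType)
    (h : forall v, rel (H v)) :
  simple_graph g ->
  (forall v, simple_graph (h v)) ->
  (exists v, ~ complete_graph (h v)) ->
  (forall C : {set V}, clique g C ->
     (forall v, v \in C -> ~ complete_graph (h v)) ->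
     (\sum_(v in C) boxicity (h v) <= boxicity (gjoin g h))%N) /\
  (boxicity (gjoin g h) <= \sum_(v : V) boxicity (h v))%N.
Proof.
move=> [g_sym _] h_simple [v0 _].
have h_sym v : symmetric (h v) := (h_simple v).1.
split=> [C clC ncC|].
  have [_ join_rep] := boxicity_finite (gjoin_sym g_sym h_sym).
  exact: sum_boxicity_clique_le clC ncC join_rep.
by apply: boxicity_gjoin_le => //; apply/card_gt0P; exists v0.
Qed.
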